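(* Consider a platoon of a leader moving at constant speed and $N$ heterogeneous followers with all states measured ($c_p=c_v=c_a=1$). For follower $i\in\{1,\dots,N\}$ with inertial time lag $\tau_i>0$ let $$A_i=\begin{bmatrix}0&1&0\\0&0&1\\0&0&-1/\tau_i\end{bmatrix},\qquad B_i=\begin{bmatrix}0\\0\\1/\tau_i\end{bmatrix}.$$ Suppose the information flow topology among the followers is a directed acyclic graph with $d_{ii}+p_{ii}>0$ for every $i$. For each $i$, let $\varepsilon_i>0$, let $P_i\succeq 0$ be a root of the algebraic Riccati equation $$P_iA_i+A_i^TP_i-P_iB_iB_i^TP_i+\varepsilon_iI_3=0,$$ and set the feedback gain $k_i=[k_{ip},k_{iv},k_{ia}]^T$ by $k_i^T=\alpha_iB_i^TP_i$. If $\alpha_i\ge\frac{1}{2(d_{ii}+p_{ii})}$ for all $i\in\{1,\dots,N\}$, then the closed-loop system $$\begin{bmatrix}\dot{\hat p}\\ \dot{\hat v}\\ \dot{\hat a}\end{bmatrix}=\begin{bmatrix}0&I_N&0\\0&0&I_N\\-T_pG&-T_vG&-\Delta-T_aG\end{bmatrix}\begin{bmatrix}\hat p\\ \hat v\\ \hat a\end{bmatrix}$$ is asymptotically stable, where $\Delta=\mathrm{diag}\{1/\tau_1,\dots,1/\tau_N\}$, $T_\sharp=\mathrm{diag}\{k_{1\sharp}/\tau_1,\dots,k_{N\sharp}/\tau_N\}$ for $\sharp\in\{p,v,a\}$, and $G=\mathcal{L}+\mathcal{P}$.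
   Context: The information flow among followers is a directed graph on $\{1,\dots,N\}$ with adjacency matrix $\mathcal{A}=[a_{ij}]$, $a_{ij}=1$ if follower $i$ receives information from follower $j$, else $0$, and $a_{ii}=0$. The degree matrix is $\mathcal{D}=\mathrm{diag}\{d_{11},\dots,d_{NN}\}$ with $d_{ii}=\sum_{k=1}^N a_{ik}$, and the Laplacian is $\mathcal{L}=\mathcal{D}-\mathcal{A}$. The pinning matrix is $\mathcal{P}=\mathrm{diag}\{p_{11},\dots,p_{NN}\}$ with $p_{ii}=1$ if follower $i$ receives information from the leader, else $0$. A directed acyclic graph is a finite directed graph with no directed cycles. The vectors $\hat p,\hat v,\hat a\in\mathbb{R}^N$ collect the followers' position, velocity and acceleration tracking errors $\hat p_i=p_i-p_0+id_0$, $\hat v_i=v_i-v_0$, $\hat a_i=a_i$ under the controller $u_i=-k_i^T(\sum_j a_{ij}(\hat x_i-\hat x_j)+p_{ii}\hat x_i)$, $\hat x_i=[\hat p_i,\hat v_i,\hat a_i]^T$, for vehicle dynamics $\dot p_i=v_i$, $\dot v_i=a_i$, $\tau_i\dot a_i+a_i=u_i$. *)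

From HB Require Import structures.
From mathcomp Require Import all_boot all_order all_algebra.
From mathcomp Require Import all_classical all_reals all_analysis.
Set Implicit Arguments. Unset Strict Implicit. Unset Printing Implicit Defensive.
Import Order.TTheory GRing.Theory Num.Theory.
Import numFieldNormedType.Exports.
Local Open Scope ring_scope.
Local Open Scope classical_set_scope.

Section Platoon.
Variable R : realType.

Definition Ai (tau : R) : 'M[R]_3 :=
  \matrix_(r < 3, c < 3)
    (if (r == 0%N :> nat) && (c == 1%N :> nat) then 1
     else if (r == 1%N :> nat) && (c == 2%N :> nat) then 1
     else if (r == 2%N :> nat) && (c == 2%N :> nat) then - tau^-1
     else 0).

Definition Bi (tau : R) : 'cV[R]_3 :=
  \col_(r < 3) (if r == 2%N :> nat then tau^-1 else 0).

Definition psd (n : nat) (P : 'M[R]_n) : Prop :=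
  P^T = P /\ forall x : 'cV[R]_n, 0 <= (x^T *m P *m x) 0 0.

Definition ARE_root (A : 'M[R]_3) (B : 'cV[R]_3) (eps : R) (P : 'M[R]_3) : Prop :=
  P *m A + A^T *m P - P *m B *m B^T *m P + eps%:M = 0.

(* graph: a i j = true iff follower i receives information from follower j *)
Definition directed_acyclic (N : nat) (a : 'I_N -> 'I_N -> bool) : Prop :=
  ~ exists (i : 'I_N) (s : seq 'I_N),
      s != [::] /\ path (fun x y => a x y) i s /\ last i s = i.

Definition deg (N : nat) (a : 'I_N -> 'I_N -> bool) (i : 'I_N) : R :=
  \sum_(k < N) (a i k)%:R.

Definition Gmat (N : nat) (a : 'I_N -> 'I_N -> bool) (p : 'I_N -> bool) : 'M[R]_N :=
  \matrix_(i, j) ((i == j)%:R * (deg a i + (p i)%:R) - (a i j)%:R).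

Definition gain (tau alpha : R) (P : 'M[R]_3) : 'rV[R]_3 :=
  alpha *: ((Bi tau)^T *m P).

(* T_# = diag{k_{i#}/tau_i}, # = 0 (p), 1 (v), 2 (a) *)
Definition Tmat (N : nat) (tau alpha : 'I_N -> R) (P : 'I_N -> 'M[R]_3) (c : 'I_3)
  : 'M[R]_N :=
  diag_mx (\row_i (gain (tau i) (alpha i) (P i) ord0 c / tau i)).

Definition Delta (N : nat) (tau : 'I_N -> R) : 'M[R]_N := diag_mx (\row_i (tau i)^-1).

Definition closed_loop (N : nat) (tau alpha : 'I_N -> R) (P : 'I_N -> 'M[R]_3)
    (G : 'M[R]_N) : 'M[R]_(N + (N + N)) :=
  let Tp := Tmat tau alpha P (@Ordinal 3 0 isT) in
  let Tv := Tmat tau alpha P (@Ordinal 3 1 isT) in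
  let Ta := Tmat tau alpha P (@Ordinal 3 2 isT) in
  block_mx (0 : 'M[R]_(N, N)) (row_mx 1%:M 0)
           (col_mx 0 (- (Tp *m G)))
           (block_mx 0 1%:M (- (Tv *m G)) (- Delta tau - Ta *m G)).

Definition is_solution (n : nat) (M : 'M[R]_n) (x : R -> 'cV[R]_n) : Prop :=
  forall (t : R) (i : 'I_n),
    is_derive t 1 (fun s => x s i 0) (\sum_(j < n) M i j * x t j 0).

Definition asymptotically_stable (n : nat) (M : 'M[R]_n) : Prop :=
  (forall e : R, 0 < e -> exists2 d : R, 0 < d &
     forall x, is_solution M x -> (forall i, `|x 0 i 0| < d) ->
       forall t, 0 <= t -> forall i, `|x t i 0| < e)
  /\ (forall x, is_solution M x ->
       forall i, (fun t => x t i 0) @ +oo --> (0 : R)).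

End Platoon.

(* Each follower i sees the errors of its neighbours only through s_i = sum_j a_ij x_j.
   With d_i > 0 small, V_i(x) = x^T (P_i + d_i I) x is an input-to-state Lyapunov function
   of the follower's error dynamics x' = A_i x - B_i k_i^T (g_i x - s_i), g_i = d_ii + p_ii:
   the Riccati equation and alpha_i g_i >= 1/2 give
   V_i' <= - eps_i/2 |x_i|^2 + D_i |s_i|^2.
   Acyclicity yields, for every K >= 1, weights w_i > 0 with K w_i <= w_j whenever
   follower i listens to follower j (rank followers by the number of followers they reach).
   For K large the coupling terms of W = sum_i w_i V_i are absorbed by the dissipation of
   the followers they come from, so W is a strict quadratic Lyapunov function of the closed
   loop. *)

From HB Require Import structures.
From mathcomp Require Import all_boot all_order all_algebra.
From mathcomp Require Import all_classical all_reals all_analysis.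
From mathcomp Require Import ring lra zify.
Import Order.TTheory GRing.Theory Num.Theory.
Import numFieldNormedType.Exports.
Set Implicit Arguments. Unset Strict Implicit. Unset Printing Implicit Defensive.
Local Open Scope ring_scope.

Lemma ler_term_sum (R : realType) (I : finType) (F : I -> R) i :
  (forall j, 0 <= F j) -> F i <= \sum_j F j.
Proof. by move=> F_ge0; rewrite (bigD1 i) //= lerDl sumr_ge0. Qed.

Lemma pos_lower_bound (R : realType) (I : finType) (c : I -> R) :
  (forall i, 0 < c i) -> exists2 m, 0 < m & forall i, m <= c i.
Proof.
move=> c_gt0; have inv_ge0 i : 0 <= (c i)^-1 by rewrite invr_ge0 ltW.
have S_gt0 : 0 < 1 + \sum_i (c i)^-1 by rewrite ltr_wpDr ?sumr_ge0.
exists (1 + \sum_i (c i)^-1)^-1 => [|i]; first by rewrite invr_gt0.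
rewrite -[c i]invrK lef_pV2 ?posrE ?invr_gt0 //.
by rewrite (le_trans (ler_term_sum _ inv_ge0)) // lerDr.
Qed.

Lemma sqr_sum_mul_le (R : realType) n (u v : 'I_n -> R) :
  (\sum_k u k * v k) ^+ 2 <= (\sum_k u k ^+ 2) * (\sum_k v k ^+ 2).
Proof.
have sum_mul (f g : 'I_n -> R) : (\sum_j f j) * (\sum_k g k) = \sum_j \sum_k f j * g k.
  by rewrite mulr_suml; apply: eq_bigr => j _; rewrite mulr_sumr.
pose y j k := u j ^+ 2 * v k ^+ 2.
rewrite expr2 !sum_mul -/y.
apply: (@le_trans _ _ (\sum_j \sum_k (y j k + y k j) / 2)).
  apply: ler_sum => j _; apply: ler_sum => k _.
  have := sqr_ge0 (u j * v k - u k * v j); rewrite /y; nra.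
under eq_bigr do rewrite -mulr_suml big_split /=.
rewrite -mulr_suml big_split /= [X in _ + X]exchange_big /=; lra.
Qed.

Lemma young_sqr (R : realType) (e a b : R) : 0 < e -> 2 * a * b <= e * a ^+ 2 + e^-1 * b ^+ 2.
Proof.
move=> e_gt0; have e_neq0 : e != 0 by rewrite gt_eqF.
have : 0 <= e^-1 * (e * a - b) ^+ 2 by apply: mulr_ge0; [rewrite invr_ge0 ltW | exact: sqr_ge0].
have -> : e^-1 * (e * a - b) ^+ 2 = e * a ^+ 2 - 2 * a * b + e^-1 * b ^+ 2 by field.
lra.
Qed.

(** * Quadratic Lyapunov functions *)

Lemma derive_le0_nonincreasing (R : realType) (f df : R -> R) (a b : R) :
  (forall t : R, is_derive t 1 f (df t)) -> (forall t, a <= t <= b -> df t <= 0) ->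
  a <= b -> f b <= f a.
Proof.
move=> f_df df_le0 ab.
have [c cab fab] := MVT_segment ab (fun t _ => f_df t)
  (derivable_within_continuous (fun t _ => @ex_derive _ _ _ _ _ _ _ (f_df t))).
rewrite -subr_le0 fab mulr_le0_ge0 ?subr_ge0 //; apply: df_le0.
by move: cab; rewrite in_itv.
Qed.

Definition sqnorm (R : realType) (n : nat) (v : 'cV[R]_n) : R :=
  \sum_(k < n) v k 0 ^+ 2.

Lemma sqnorm_ge0 (R : realType) n (v : 'cV[R]_n) : 0 <= sqnorm v.
Proof. by apply: sumr_ge0 => k _; exact: sqr_ge0. Qed.

Lemma ler_sqnorm (R : realType) n (v : 'cV[R]_n) i : v i 0 ^+ 2 <= sqnorm v.
Proof.
by rewrite /sqnorm (bigD1 i) //= lerDl; apply: sumr_ge0 => k _; exact: sqr_ge0.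
Qed.

Lemma sqnorm_le (R : realType) n (v : 'cV[R]_n) d :
  (forall i, `|v i 0| < d) -> sqnorm v <= n%:R * d ^+ 2.
Proof.
move=> vd; rewrite mulr_natl -{2}(card_ord n) -sumr_const.
apply: ler_sum => k _; rewrite -real_normK ?num_real //.
have d_ge0 : 0 <= d := le_trans (normr_ge0 _) (ltW (vd k)).
by rewrite ler_pXn2r ?nnegrE // ltW.
Qed.

Lemma ltr_norm_sqr (R : realType) (y e : R) : 0 < e -> y ^+ 2 < e ^+ 2 -> `|y| < e.
Proof.
move=> e0; rewrite -real_normK ?num_real // => ye.
by rewrite -(@ltr_pXn2r _ 2) ?nnegrE ?(ltW e0).
Qed.

Section LyapunovCriterion.
Local Open Scope classical_set_scope.
Variables (R : realType) (n : nat) (M : 'M[R]_n) (W : 'cV[R]_n -> R) (c1 c2 c3 : R).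
Hypothesis c1_gt0 : 0 < c1.
Hypothesis c2_gt0 : 0 < c2.
Hypothesis c3_gt0 : 0 < c3.
Hypothesis W_ge : forall v, c1 * sqnorm v <= W v.
Hypothesis W_le : forall v, W v <= c2 * sqnorm v.
Hypothesis W_derive : forall x, is_solution M x -> exists dW : R -> R,
  (forall t : R, is_derive t 1 (fun s => W (x s)) (dW t)) /\
  (forall t, dW t <= - (c3 * sqnorm (x t))).

Lemma lyapunov_nonincreasing x : is_solution M x ->
  forall a b, a <= b -> W (x b) <= W (x a).
Proof.
move=> xs a b ab; have [dW [W_dW dW_le]] := W_derive xs.
apply: (derive_le0_nonincreasing W_dW) => // t _.
apply: le_trans (dW_le t) _.
by rewrite oppr_le0; apply: mulr_ge0; [exact: ltW | exact: sqnorm_ge0].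
Qed.

Lemma lyapunov_entry_le (v : 'cV[R]_n) i : c1 * v i 0 ^+ 2 <= W v.
Proof. by apply: le_trans (W_ge v); rewrite ler_pM2l // ler_sqnorm. Qed.

Lemma lyapunov_stable (e : R) : 0 < e -> exists2 d : R, 0 < d &
  forall x, is_solution M x -> (forall i, `|x 0 i 0| < d) ->
  forall t, 0 <= t -> forall i, `|x t i 0| < e.
Proof.
move=> e_gt0.
have c2n_ge0 : 0 <= c2 * n%:R by apply: mulr_ge0 => //; exact: ltW.
have cn_gt0 : 0 < c1 + c2 * n%:R by rewrite ltr_wpDr.
set c := c1 / (c1 + c2 * n%:R).
have c_gt0 : 0 < c by rewrite divr_gt0.
have c_le1 : c <= 1 by rewrite ler_pdivrMr // mul1r lerDl.
have c2nc : c2 * n%:R * c < c1.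
  by rewrite /c mulrA ltr_pdivrMr // mulrC ltr_pM2l // ltrDr.
exists (e * c); first exact: mulr_gt0.
move=> x xs x0_small t t_ge0 i; apply: ltr_norm_sqr => //.
rewrite -(ltr_pM2l c1_gt0).
apply: le_lt_trans (lyapunov_entry_le (x t) i) _.
apply: le_lt_trans (lyapunov_nonincreasing xs t_ge0) _.
apply: le_lt_trans (W_le _) _.
apply: le_lt_trans (ler_wpM2l (ltW c2_gt0) (sqnorm_le x0_small)) _.
have e2_gt0 : 0 < e ^+ 2 by exact: exprn_gt0.
have -> : c2 * (n%:R * (e * c) ^+ 2) = (c2 * n%:R * c) * c * e ^+ 2 by ring.
rewrite ltr_pM2r //.
apply: le_lt_trans c2nc; apply: ler_piMr c_le1.
exact: mulr_ge0 c2n_ge0 (ltW c_gt0).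
Qed.

Lemma lyapunov_eventually_lt x : is_solution M x ->
  forall eta : R, 0 < eta -> exists2 T : R, 0 <= T & W (x T) < eta.
Proof.
move=> xs eta eta_gt0; apply: contrapT => W_small_never.
have W_ge_eta t : 0 <= t -> eta <= W (x t).
  by move=> t_ge0; rewrite leNgt; apply/negP => lt; apply: W_small_never; exists t.
have [dW [W_dW dW_le]] := W_derive xs.
(* While [W >= eta], [W] decreases at rate at least [k], because [W <= c2 * sqnorm]. *)
set k := c3 / c2 * eta.
have k_gt0 : 0 < k by rewrite mulr_gt0 // divr_gt0.
have W0_ge0 : 0 <= W (x 0).
  by apply: le_trans (W_ge _); rewrite mulr_ge0 ?sqnorm_ge0 // ltW.
set t1 := W (x 0) / k + 1.
have t1_ge0 : 0 <= t1 by rewrite addr_ge0 // divr_ge0 // ltW.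
have Wk_derive (t : R) : is_derive t 1 (fun s => W (x s) + k * s) (dW t + k).
  have := is_deriveZ k (is_derive_id t 1); rewrite /GRing.scale /= mulr1.
  exact: is_deriveD.
have : W (x t1) + k * t1 <= W (x 0) + k * 0.
  apply: (derive_le0_nonincreasing Wk_derive) => // t /andP[t_ge0 _].
  have : k <= c3 * sqnorm (x t).
    rewrite /k mulrAC ler_pdivrMr // -mulrA ler_pM2l // mulrC.
    exact: le_trans (W_ge_eta _ t_ge0) (W_le _).
  by have := dW_le t; lra.
have := W_ge_eta t1 t1_ge0.
have -> : k * t1 = W (x 0) + k by rewrite /t1 mulrDr mulr1 mulrC divfK ?gt_eqF.
lra.
Qed.

Lemma lyapunov_attractive x : is_solution M x ->
  forall i, (fun t => x t i 0) @ +oo --> (0 : R).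
Proof.
move=> xs i; apply/cvgr0Pnorm_lt => e e_gt0.
have c1e_gt0 : 0 < c1 * e ^+ 2 by rewrite mulr_gt0 // exprn_gt0.
have [T T_ge0 WT] := lyapunov_eventually_lt xs c1e_gt0.
exists T; split; first by rewrite num_real.
move=> t Tt; apply: ltr_norm_sqr => //; rewrite -(ltr_pM2l c1_gt0).
apply: le_lt_trans (lyapunov_entry_le _ i) _; apply: le_lt_trans WT.
exact: lyapunov_nonincreasing xs _ _ (ltW Tt).
Qed.

Lemma asymptotically_stable_of_lyapunov : asymptotically_stable M.
Proof. by split; [exact: lyapunov_stable | exact: lyapunov_attractive]. Qed.

End LyapunovCriterion.

(** * Bilinear forms on column vectors *)

Section BilinearForm.
Variables (R : realType) (n : nat).
Implicit Types (Q A : 'M[R]_n) (x y : 'cV[R]_n).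

Definition bform Q x y : R := (x^T *m Q *m y) 0 0.

Lemma bformE Q x y : bform Q x y = \sum_i \sum_j x i 0 * Q i j * y j 0.
Proof.
rewrite /bform mxE exchange_big; apply: eq_bigr => j _.
by rewrite mxE mulr_suml; apply: eq_bigr => i _; rewrite mxE.
Qed.

Lemma bform1 x y : bform 1%:M x y = \sum_i x i 0 * y i 0.
Proof. by rewrite /bform mulmx1 mxE; apply: eq_bigr => i _; rewrite mxE. Qed.

Lemma bform1_sqnorm x : bform 1%:M x x = sqnorm x.
Proof. by rewrite bform1 /sqnorm; apply: eq_bigr => i _; rewrite expr2. Qed.

Lemma bformDm Q1 Q2 x y : bform (Q1 + Q2) x y = bform Q1 x y + bform Q2 x y.
Proof. by rewrite /bform mulmxDr mulmxDl mxE. Qed.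

Lemma bformBm Q1 Q2 x y : bform (Q1 - Q2) x y = bform Q1 x y - bform Q2 x y.
Proof. by rewrite /bform mulmxBr mulmxBl !mxE. Qed.

Lemma bform_scalar (a : R) x y : bform a%:M x y = a * bform 1%:M x y.
Proof. by rewrite /bform mul_mx_scalar -scalemxAl mulmx1 mxE. Qed.

Lemma bformDl Q x1 x2 y : bform Q (x1 + x2) y = bform Q x1 y + bform Q x2 y.
Proof. by rewrite /bform linearD /= !mulmxDl mxE. Qed.

Lemma bformDr Q x y1 y2 : bform Q x (y1 + y2) = bform Q x y1 + bform Q x y2.
Proof. by rewrite /bform mulmxDr mxE. Qed.

Lemma bformZl Q (a : R) x y : bform Q (a *: x) y = a * bform Q x y.
Proof. by rewrite /bform linearZ /= -!scalemxAl mxE. Qed.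

Lemma bformZr Q (a : R) x y : bform Q x (a *: y) = a * bform Q x y.
Proof. by rewrite /bform -scalemxAr mxE. Qed.

Lemma bform_mulmxl Q A x y : bform Q (A *m x) y = bform (A^T *m Q) x y.
Proof. by rewrite /bform trmx_mul !mulmxA. Qed.

Lemma bform_mulmxr Q A x y : bform Q x (A *m y) = bform (Q *m A) x y.
Proof. by rewrite /bform !mulmxA. Qed.

Let mx11_tr (M : 'M[R]_1) : M 0 0 = M^T 0 0.
Proof. by rewrite mxE. Qed.

Lemma bform_sym Q x y : Q^T = Q -> bform Q x y = bform Q y x.
Proof.
by move=> symQ; rewrite /bform mx11_tr !trmx_mul trmxK symQ mulmxA.
Qed.

Lemma bform_dotr Q x u : bform Q x u = ((Q *m u)^T *m x) 0 0.
Proof. by rewrite /bform -mulmxA mx11_tr trmx_mul trmxK. Qed.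

Lemma bform_rank1 (u v : 'cV[R]_n) x y :
  bform (u *m v^T) x y = (u^T *m x) 0 0 * (v^T *m y) 0 0.
Proof.
by rewrite /bform mulmxA -mulmxA mxE big_ord1 [in LHS]mx11_tr trmx_mul trmxK.
Qed.

Lemma sqr_dot_le (u x : 'cV[R]_n) : ((u^T *m x) 0 0) ^+ 2 <= sqnorm u * sqnorm x.
Proof.
rewrite mxE (eq_bigr (fun k => u k 0 * x k 0)) => [|k _]; last by rewrite mxE.
exact: sqr_sum_mul_le.
Qed.

Lemma sqnorm_mulmx_le A x : sqnorm (A *m x) <= (\sum_i \sum_j A i j ^+ 2) * sqnorm x.
Proof.
rewrite /sqnorm mulr_suml; apply: ler_sum => i _.
rewrite mxE; exact: sqr_sum_mul_le.
Qed.

Lemma bform_le Q x : 2 * bform Q x x <= (1 + \sum_i \sum_j Q i j ^+ 2) * sqnorm x.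
Proof.
have -> : bform Q x x = bform 1%:M x (Q *m x) by rewrite bform_mulmxr mul1mx.
apply: (@le_trans _ _ (sqnorm x + sqnorm (Q *m x))).
  rewrite bform1 mulr_sumr /sqnorm -big_split /=; apply: ler_sum => i _.
  by have := (leif_mean_square_scaled (x i 0) ((Q *m x) i 0)).1; lra.
by rewrite mulrDl mul1r lerD2l sqnorm_mulmx_le.
Qed.

Lemma bform_shift_bounds Q (d : R) x : 0 <= bform Q x x ->
  d * sqnorm x <= bform (Q + d%:M) x x /\
  bform (Q + d%:M) x x <= ((1 + \sum_i \sum_j Q i j ^+ 2) / 2 + d) * sqnorm x.
Proof.
rewrite bformDm bform_scalar bform1_sqnorm => Q_ge0.
by split; [lra | have := bform_le Q x; lra].
Qed.

End BilinearForm.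

Section BformDerive.
Variables (R : realType) (t : R).

Lemma is_derive_sum_fun n (h : 'I_n -> R -> R) (dh : 'I_n -> R) :
  (forall i, is_derive t 1 (h i) (dh i)) ->
  is_derive t 1 (fun s => \sum_(i < n) h i s) (\sum_(i < n) dh i).
Proof.
move=> h_dh; have := is_derive_sum h_dh.
by have -> : \sum_(i < n) h i = (fun s => \sum_(i < n) h i s) by apply: funext => s; rewrite fct_sumE.
Qed.

Lemma is_derive_mul_fun (f g : R -> R) (df dg : R) :
  is_derive t 1 f df -> is_derive t 1 g dg ->
  is_derive t 1 (fun s => f s * g s) (df * g t + f t * dg).
Proof.
move=> f_df g_dg; have := is_deriveM f_df g_dg.
have -> : (f * g)%R = (fun s => f s * g s) by apply: funext.
by move=> fg; apply: is_derive_eq fg _; rewrite /GRing.scale /= addrC mulrC.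
Qed.

Lemma is_derive_bform n (Q : 'M[R]_n) (x : R -> 'cV[R]_n) (dx : 'cV[R]_n) :
  (forall k, is_derive t 1 (fun s => x s k 0) (dx k 0)) ->
  is_derive t 1 (fun s => bform Q (x s) (x s)) (bform Q dx (x t) + bform Q (x t) dx).
Proof.
move=> x_dx.
have -> : (fun s => bform Q (x s) (x s)) =
    (fun s => \sum_i \sum_j x s i 0 * Q i j * x s j 0) by apply: funext => s; rewrite bformE.
rewrite !bformE -big_split /=.
apply: is_derive_sum_fun => i; rewrite -big_split /=.
apply: is_derive_sum_fun => j.
have := is_derive_mul_fun (is_derive_mul_fun (x_dx i) (is_derive_cst (Q i j) t 1)) (x_dx j).
by move=> d; apply: is_derive_eq d _; rewrite /cst; ring.
Qed.
End BformDerive.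

(** * A single follower under Riccati feedback *)

Lemma riccati_term_le (R : realType) (eps alpha g c y z X S : R) :
  0 < eps -> 0 < c -> 0 <= alpha -> 1 <= 2 * alpha * g ->
  y ^+ 2 <= c * X -> z ^+ 2 <= c * S ->
  y ^+ 2 - 2 * alpha * (g * y - z) * y <= eps / 4 * X + 4 * c ^+ 2 * alpha ^+ 2 / eps * S.
Proof.
move=> eps_gt0 c_gt0 alpha_ge0 alpha_g yX zS.
have eta_gt0 : 0 < eps / (4 * c) by rewrite divr_gt0 // mulr_gt0.
have := young_sqr y (alpha * z) eta_gt0.
have : eps / (4 * c) * y ^+ 2 <= eps / 4 * X.
  apply: le_trans (ler_wpM2l (ltW eta_gt0) yX) _.
  by rewrite le_eqVlt; apply/orP; left; apply/eqP; field; rewrite gt_eqF.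
have : (eps / (4 * c))^-1 * (alpha * z) ^+ 2 <= 4 * c ^+ 2 * alpha ^+ 2 / eps * S.
  have -> : (eps / (4 * c))^-1 * (alpha * z) ^+ 2 = 4 * c * alpha ^+ 2 / eps * z ^+ 2.
    by field; rewrite !gt_eqF.
  apply: le_trans (ler_wpM2l _ zS) _.
    by apply: divr_ge0; [rewrite mulr_ge0 ?sqr_ge0 // mulr_ge0 // ltW | exact: ltW].
  by rewrite le_eqVlt; apply/orP; left; apply/eqP; field; rewrite gt_eqF.
have : 0 <= (2 * alpha * g - 1) * y ^+ 2 by apply: mulr_ge0; [rewrite subr_ge0 | exact: sqr_ge0].
nra.
Qed.

Lemma input_term_le (R : realType) (alpha g cy cB y z w X S : R) :
  0 <= alpha -> 0 <= g -> y ^+ 2 <= cy * X -> z ^+ 2 <= cy * S -> w ^+ 2 <= cB * X ->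
  - 2 * alpha * (g * y - z) * w <= (alpha * g * (cy + cB) + alpha * cB) * X + alpha * cy * S.
Proof.
move=> alpha_ge0 g_ge0 yX zS wX.
have ag_ge0 : 0 <= alpha * g by rewrite mulr_ge0.
have := mulr_ge0 ag_ge0 (sqr_ge0 (y + w)).
have := mulr_ge0 alpha_ge0 (sqr_ge0 (z - w)).
have := ler_wpM2l ag_ge0 (lerD yX wX).
have := ler_wpM2l alpha_ge0 (lerD zS wX).
nra.
Qed.

Section FeedbackISS.
Variables (R : realType) (n : nat) (A P : 'M[R]_n) (B : 'cV[R]_n) (eps alpha g : R).
Hypothesis P_sym : P^T = P.
Hypothesis P_ARE : P *m A + A^T *m P - P *m B *m B^T *m P + eps%:M = 0.

Definition feedback_field (x s : 'cV[R]_n) : 'cV[R]_n :=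
  A *m x - B *m (alpha *: (B^T *m P) *m (g *: x - s)).

Let y (v : 'cV[R]_n) : R := ((P *m B)^T *m v) 0 0.

Lemma feedback_fieldE x s :
  feedback_field x s = A *m x + (- (alpha * (g * y x - y s))) *: B.
Proof.
rewrite /feedback_field [_ *m (g *: x - s)]mx11_scalar mul_mx_scalar scaleNr.
congr (_ - (_ *: _)); rewrite /y trmx_mul P_sym !mxE.
rewrite mulr_sumr -sumrB mulr_sumr; apply: eq_bigr => j _; rewrite !mxE; ring.
Qed.

Lemma ARE_bform x :
  bform P (A *m x) x + bform P x (A *m x) = y x ^+ 2 - eps * sqnorm x.
Proof.
have ARE : P *m A + A^T *m P = (P *m B) *m (P *m B)^T - eps%:M.
  move/eqP: P_ARE; rewrite addr_eq0 subr_eq => /eqP ->.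
  by rewrite trmx_mul P_sym !mulmxA addrC.
rewrite bform_mulmxl bform_mulmxr addrC -bformDm ARE bformBm bform_rank1.
by rewrite bform_scalar bform1_sqnorm expr2.
Qed.

Lemma bformP_field x (u : R) :
  bform P (A *m x + u *: B) x + bform P x (A *m x + u *: B) =
  y x ^+ 2 - eps * sqnorm x + 2 * u * y x.
Proof.
rewrite bformDl bformDr addrACA ARE_bform bformZl bformZr.
by rewrite bform_sym // bform_dotr -/(y x); ring.
Qed.

Lemma bform1_field x (u : R) :
  bform 1%:M (A *m x + u *: B) x + bform 1%:M x (A *m x + u *: B) =
  2 * bform A x x + 2 * u * (B^T *m x) 0 0.
Proof.
have sym1 v w : bform 1%:M v w = bform 1%:M w v by rewrite bform_sym ?trmx1.
rewrite bformDl bformDr bformZl bformZr [bform _ (A *m x) x]sym1 [bform _ B x]sym1.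
by rewrite [bform _ x (A *m x)]bform_mulmxr [bform _ x B]bform_dotr !mul1mx; ring.
Qed.

Hypothesis P_psd : forall x, 0 <= bform P x x.
Hypothesis eps_gt0 : 0 < eps.
Hypothesis g_gt0 : 0 < g.
Hypothesis alpha_ge : (2 * g)^-1 <= alpha.

Let alpha_ge0 : 0 <= alpha.
Proof. by rewrite (le_trans _ alpha_ge) // invr_ge0 mulr_ge0 // ltW. Qed.

Let alpha_g : 1 <= 2 * alpha * g.
Proof.
have two_g_gt0 : 0 < 2 * g by rewrite mulr_gt0.
by have := ler_wpM2l (ltW two_g_gt0) alpha_ge; rewrite divff ?gt_eqF //; lra.
Qed.

Let cy := sqnorm (P *m B) + 1.

Let cy_gt0 : 0 < cy.
Proof. by rewrite ltr_wpDl ?sqnorm_ge0. Qed.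

Let y_le v : y v ^+ 2 <= cy * sqnorm v.
Proof. by rewrite (le_trans (sqr_dot_le _ _)) // ler_wpM2r ?sqnorm_ge0 ?lerDl. Qed.

Let K := 1 + \sum_i \sum_j A i j ^+ 2 + (alpha * g * (cy + sqnorm B) + alpha * sqnorm B).

Let K_gt0 : 0 < K.
Proof.
have : 0 <= \sum_i \sum_j A i j ^+ 2.
  by rewrite sumr_ge0 // => i _; rewrite sumr_ge0 // => j _; rewrite sqr_ge0.
have : 0 <= alpha * g * (cy + sqnorm B).
  by rewrite !mulr_ge0 ?addr_ge0 ?sqnorm_ge0 // ltW.
have : 0 <= alpha * sqnorm B by rewrite mulr_ge0 ?sqnorm_ge0.
rewrite /K; lra.
Qed.

Lemma feedback_derivative_le (d : R) x s : 0 <= d -> d * K <= eps / 4 ->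
  bform (P + d%:M) (feedback_field x s) x + bform (P + d%:M) x (feedback_field x s)
    <= - (eps / 2 * sqnorm x) + (4 * cy ^+ 2 * alpha ^+ 2 / eps + d * (alpha * cy)) * sqnorm s.
Proof.
move=> d_ge0 dK.
rewrite feedback_fieldE !bformDm.
rewrite [bform d%:M _ _]bform_scalar [bform d%:M _ _]bform_scalar addrACA -mulrDr.
rewrite bformP_field bform1_field.
have := riccati_term_le eps_gt0 cy_gt0 alpha_ge0 alpha_g (y_le x) (y_le s).
have := input_term_le alpha_ge0 (ltW g_gt0) (y_le x) (y_le s) (sqr_dot_le B x).
have := bform_le A x.
move=> hA hI hR; have := ler_wpM2l d_ge0 (lerD hA hI).
have := ler_wpM2r (sqnorm_ge0 x) dK; rewrite /K.
lra.
Qed.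

Lemma feedback_iss : exists (Q : 'M[R]_n) (c1 c2 D : R),
  [/\ 0 < c1, 0 < c2, 0 <= D & forall x s, [/\ c1 * sqnorm x <= bform Q x x,
    bform Q x x <= c2 * sqnorm x &
    bform Q (feedback_field x s) x + bform Q x (feedback_field x s)
      <= - (eps / 2 * sqnorm x) + D * sqnorm s]].
Proof.
pose d := eps / (4 * K).
have d_gt0 : 0 < d by rewrite divr_gt0 // mulr_gt0.
have dK : d * K = eps / 4 by rewrite /d; field; rewrite gt_eqF.
have P_norm_ge0 : 0 <= \sum_i \sum_j P i j ^+ 2.
  by rewrite sumr_ge0 // => i _; rewrite sumr_ge0 // => j _; rewrite sqr_ge0.
have D_ge0 : 0 <= 4 * cy ^+ 2 * alpha ^+ 2 / eps + d * (alpha * cy).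
  apply: addr_ge0; last exact: mulr_ge0 (ltW d_gt0) (mulr_ge0 alpha_ge0 (ltW cy_gt0)).
  exact: divr_ge0 (mulr_ge0 (mulr_ge0 (ler0n _ 4) (sqr_ge0 cy)) (sqr_ge0 alpha)) (ltW eps_gt0).
exists (P + d%:M), d, ((1 + \sum_i \sum_j P i j ^+ 2) / 2 + d),
  (4 * cy ^+ 2 * alpha ^+ 2 / eps + d * (alpha * cy)).
split => //; first lra.
move=> x s; have [Q_ge Q_le] := bform_shift_bounds d (P_psd x).
by split => //; apply: feedback_derivative_le; rewrite ?dK // ltW.
Qed.

End FeedbackISS.

(** * The platoon *)

Local Notation o0 := (@Ordinal 3 0 isT).
Local Notation o1 := (@Ordinal 3 1 isT).
Local Notation o2 := (@Ordinal 3 2 isT).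

Lemma sum3 (R : realType) (f : 'I_3 -> R) : \sum_(c < 3) f c = f o0 + f o1 + f o2.
Proof. by rewrite !big_ord_recr big_ord0 /= add0r; congr (_ + _ + _); congr f; apply: val_inj. Qed.

Lemma feedback_field_vehicle (R : realType) (tau alpha g : R) (P : 'M[R]_3) (x s : 'cV[R]_3) c :
  feedback_field (Ai tau) P (Bi tau) alpha g x s c 0 =
  if c == o0 then x o1 0 else if c == o1 then x o2 0
  else - (tau^-1 * x o2 0) - \sum_(k < 3) gain tau alpha P 0 k / tau * (g * x k 0 - s k 0).
Proof.
rewrite /feedback_field -/(gain tau alpha P) !mxE big_ord1 !mxE !sum3.
by case: c => [[|[|[|c]]] hc] //=; rewrite /Ai /Bi !mxE /=; ring.
Qed.

(* Index of component [c] (position, velocity, acceleration) of follower [i] in the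
   stacked closed-loop state [(p; v; a)]. *)
Definition state_index (N : nat) (c : 'I_3) (i : 'I_N) : 'I_(N + (N + N)) :=
  match val c with
  | 0 => lshift (N + N) i
  | 1 => rshift N (lshift N i)
  | _ => rshift N (rshift N i)
  end.

Definition follower_state (R : realType) N (v : 'cV[R]_(N + (N + N))) (i : 'I_N) : 'cV[R]_3 :=
  \col_c v (state_index c i) 0.

Lemma sum_state_index (R : realType) N (f : 'I_(N + (N + N)) -> R) :
  \sum_k f k = \sum_(i < N) \sum_(c < 3) f (state_index c i).
Proof.
rewrite big_split_ord big_split_ord /=.
under [RHS]eq_bigr do rewrite sum3.
by rewrite !big_split /= addrA.
Qed.

Lemma sqnorm_follower_state (R : realType) N (v : 'cV[R]_(N + (N + N))) :
  sqnorm v = \sum_i sqnorm (follower_state v i).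
Proof.
by rewrite /sqnorm sum_state_index; apply: eq_bigr => i _; apply: eq_bigr => c _; rewrite mxE.
Qed.

Lemma sum_delta (R : realType) N (v : 'I_N -> R) i : \sum_j (i == j)%:R * v j = v i.
Proof.
rewrite (bigD1 i) //= eqxx mul1r big1 ?addr0 // => j /negbTE ji.
by rewrite eq_sym ji mul0r.
Qed.

Lemma Gmat_row (R : realType) N (a : 'I_N -> 'I_N -> bool) (p : 'I_N -> bool) (v : 'I_N -> R) i :
  \sum_j Gmat R a p i j * v j = (deg R a i + (p i)%:R) * v i - \sum_j (a i j)%:R * v j.
Proof.
rewrite /Gmat; under eq_bigr do rewrite mxE mulrBl -mulrA; rewrite sumrB.
by rewrite sum_delta.
Qed.

Section ClosedLoop.
Variables (R : realType) (N : nat) (a : 'I_N -> 'I_N -> bool) (p : 'I_N -> bool).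
Variables (tau alpha : 'I_N -> R) (P : 'I_N -> 'M[R]_3).

Local Notation M := (closed_loop tau alpha P (Gmat R a p)).

Lemma closed_loop_follower v i :
  follower_state (M *m v) i =
  feedback_field (Ai (tau i)) (P i) (Bi (tau i)) (alpha i) (deg R a i + (p i)%:R)
    (follower_state v i) (\sum_j (a i j)%:R *: follower_state v j).
Proof.
apply/colP => c; rewrite feedback_field_vehicle !mxE sum_state_index.
under eq_bigr do rewrite sum3.
rewrite /closed_loop /state_index.
case: c => [[|[|[|c]]] hc] //=;
  under eq_bigr do rewrite !(block_mxEul, block_mxEur, block_mxEdl, block_mxEdr,
    row_mxEl, row_mxEr, col_mxEu, col_mxEd).
- by under eq_bigr do rewrite !mxE !mul0r add0r addr0; rewrite sum_delta.
- by under eq_bigr do rewrite !mxE !mul0r !add0r; rewrite sum_delta.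
rewrite /Tmat /Delta !mul_diag_mx.
under eq_bigr do rewrite [Gmat _ _ _]lock !mxE -lock.
have row (K0 K1 K2 d : R) (G x y z : 'I_N -> R) :
    \sum_j (- (K0 * G j) * x j + - (K1 * G j) * y j + (d *- (i == j) - K2 * G j) * z j)
    = - (K0 * \sum_j G j * x j) - K1 * \sum_j G j * y j - d * z i - K2 * \sum_j G j * z j.
  rewrite -(sum_delta z i) !mulr_sumr -!sumrN -!big_split; apply: eq_bigr => j _ /=.
  by rewrite -mulr_natr; ring.
have neighbours c : \sum_j ((a i j)%:R *: follower_state v j) c 0 =
    \sum_j (a i j)%:R * v (state_index c j) 0.
  by apply: eq_bigr => j _; rewrite !mxE.
by rewrite row !Gmat_row [in RHS]sum3 !summxE !neighbours !mxE /=; ring.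
Qed.
End ClosedLoop.

Lemma acyclic_weights (R : realType) N (a : 'I_N -> 'I_N -> bool) (K : R) :
  directed_acyclic a -> 1 <= K ->
  exists w : 'I_N -> R, (forall i, 0 < w i) /\ (forall i j, a i j -> K * w i <= w j).
Proof.
move=> acyclic K_ge1.
have rk_edge i j : a i j ->
    (#|[set k | connect a j k]| < #|[set k | connect a i k]|)%N.
  move=> aij; apply: proper_card; apply/properP; split.
    by apply/fintype.subsetP => k; rewrite !inE; apply: connect_trans; exact: connect1.
  exists i; rewrite !inE ?connect0 //.
  apply/negP => /connectP[s s_path s_last].
  by apply: acyclic; exists i, (j :: s); rewrite /= aij -s_last.
exists (fun i => K ^+ (N - #|[set k | connect a i k]|)); split => [i|i j aij].
  by rewrite exprn_gt0 // (lt_le_trans ltr01).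
rewrite -exprS ler_weXn2l //.
have := rk_edge _ _ aij; have := max_card [set k | connect a i k]; rewrite card_ord; lia.
Qed.

Lemma sqnorm_neighbours_le (R : realType) n m (b : 'I_m -> bool) (u : 'I_m -> 'cV[R]_n) :
  sqnorm (\sum_j (b j)%:R *: u j) <= m%:R * \sum_j (b j)%:R * sqnorm (u j).
Proof.
have -> : \sum_j (b j)%:R * sqnorm (u j) = \sum_k \sum_j (b j)%:R * u j k 0 ^+ 2.
  by rewrite exchange_big; apply: eq_bigr => j _; rewrite mulr_sumr.
rewrite /sqnorm mulr_sumr; apply: ler_sum => k _.
rewrite summxE; under eq_bigr do rewrite mxE.
have := sqr_sum_mul_le (fun=> 1) (fun j => (b j)%:R * u j k 0).
rewrite /= (eq_bigr _ (fun j _ => mul1r _)) (eq_bigr _ (fun j _ => expr1n _ 2)).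
rewrite sumr_const card_ord => /le_trans; apply; rewrite ler_wpM2l //.
apply: ler_sum => j _; rewrite exprMn.
by case: (b j); rewrite ?expr1n ?mul1r ?expr0n ?mul0r.
Qed.

Lemma weighted_coupling_le (R : realType) N (a : 'I_N -> 'I_N -> bool) (w D X e : 'I_N -> R)
    (K : R) :
  0 < K -> (forall i, 0 < w i) -> (forall i, 0 <= D i) -> (forall j, 0 <= X j) ->
  (forall i j, a i j -> K * w i <= w j) -> (forall j, N%:R * \sum_i D i <= K * e j) ->
  \sum_i w i * (D i * (N%:R * \sum_j (a i j)%:R * X j)) <= \sum_j w j * e j * X j.
Proof.
move=> K_gt0 w_gt0 D_ge0 X_ge0 w_edge K_large.
have -> : \sum_i w i * (D i * (N%:R * \sum_j (a i j)%:R * X j)) =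
    \sum_j (\sum_i (a i j)%:R * w i * (D i * N%:R)) * X j.
  under eq_bigr do rewrite !mulr_sumr.
  rewrite exchange_big /=; apply: eq_bigr => j _; rewrite mulr_suml.
  by apply: eq_bigr => i _; ring.
apply: ler_sum => j _; apply: ler_wpM2r => //.
apply: (@le_trans _ _ (\sum_i w j / K * (D i * N%:R))).
  apply: ler_sum => i _; apply: ler_wpM2r; first by rewrite mulr_ge0.
  case: (boolP (a i j)) => [aij|_]; rewrite ?mul1r ?mul0r.
    by rewrite ler_pdivlMr // mulrC w_edge.
  by rewrite divr_ge0 // ltW.
rewrite -mulr_sumr -mulr_suml -mulrA; apply: ler_wpM2l; first exact: ltW.
by rewrite mulrC ler_pdivrMr // mulrC [e j * K]mulrC.
Qed.

Section PlatoonLyapunov.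
Variables (R : realType) (N : nat) (a : 'I_N -> 'I_N -> bool) (p : 'I_N -> bool).
Variables (tau eps alpha : 'I_N -> R) (P : 'I_N -> 'M[R]_3).
Variables (Q : 'I_N -> 'M[R]_3) (c1 c2 D w : 'I_N -> R) (K : R).

Local Notation M := (closed_loop tau alpha P (Gmat R a p)).
Local Notation follower_field i :=
  (feedback_field (Ai (tau i)) (P i) (Bi (tau i)) (alpha i) (deg R a i + (p i)%:R)).

Hypothesis eps_gt0 : forall i, 0 < eps i.
Hypothesis c1_gt0 : forall i, 0 < c1 i.
Hypothesis c2_ge0 : forall i, 0 <= c2 i.
Hypothesis D_ge0 : forall i, 0 <= D i.
Hypothesis follower_iss : forall i x s, [/\ c1 i * sqnorm x <= bform (Q i) x x,
  bform (Q i) x x <= c2 i * sqnorm x &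
  bform (Q i) (follower_field i x s) x + bform (Q i) x (follower_field i x s)
    <= - (eps i / 2 * sqnorm x) + D i * sqnorm s].
Hypothesis w_gt0 : forall i, 0 < w i.
Hypothesis w_edge : forall i j, a i j -> K * w i <= w j.
Hypothesis K_gt0 : 0 < K.
Hypothesis K_large : forall j, N%:R * \sum_i D i <= K * (eps j / 4).

Definition platoon_lyapunov (v : 'cV[R]_(N + (N + N))) : R :=
  \sum_i w i * bform (Q i) (follower_state v i) (follower_state v i).

Lemma platoon_lyapunov_ge : exists2 c, 0 < c & forall v, c * sqnorm v <= platoon_lyapunov v.
Proof.
have [c c_gt0 c_le] := pos_lower_bound (fun i => mulr_gt0 (w_gt0 i) (c1_gt0 i)).
exists c => // v; rewrite sqnorm_follower_state mulr_sumr; apply: ler_sum => i _.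
have [x_le _ _] := follower_iss i (follower_state v i) 0.
apply: le_trans (ler_wpM2l (ltW (w_gt0 i)) x_le).
by rewrite mulrA ler_wpM2r ?sqnorm_ge0.
Qed.

Lemma platoon_lyapunov_le : exists2 c, 0 < c & forall v, platoon_lyapunov v <= c * sqnorm v.
Proof.
have wc2_ge0 i : 0 <= w i * c2 i by rewrite mulr_ge0 // ltW.
exists (1 + \sum_i w i * c2 i) => [|v]; first by rewrite ltr_wpDr ?sumr_ge0.
rewrite sqnorm_follower_state mulr_sumr; apply: ler_sum => i _.
have [_ x_le _] := follower_iss i (follower_state v i) 0.
apply: le_trans (ler_wpM2l (ltW (w_gt0 i)) x_le) _.
rewrite mulrA ler_wpM2r ?sqnorm_ge0 //.
by rewrite (le_trans (ler_term_sum _ wc2_ge0)) // lerDr.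
Qed.

Lemma follower_state_derive (x : R -> 'cV[R]_(N + (N + N))) (t : R) i k :
  is_solution M x ->
  is_derive t 1 (fun s => follower_state (x s) i k 0) (follower_state (M *m x t) i k 0).
Proof.
move=> xs; rewrite !mxE.
have -> : (fun s => follower_state (x s) i k 0) = (fun s => x s (state_index k i) 0).
  by apply: funext => s; rewrite mxE.
exact: xs.
Qed.

Lemma platoon_lyapunov_derive : exists2 c : R, 0 < c & forall x, is_solution M x ->
  exists dW : R -> R,
    (forall t : R, is_derive t 1 (fun s => platoon_lyapunov (x s)) (dW t)) /\
    (forall t : R, dW t <= - (c * sqnorm (x t))).
Proof.
have [c c_gt0 c_le] := pos_lower_bound (fun i => mulr_gt0 (w_gt0 i) (divr_gt0 (eps_gt0 i) (ltr0n _ 4))).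
exists c => // x xs.
exists (fun t => \sum_i w i * (bform (Q i) (follower_state (M *m x t) i) (follower_state (x t) i) +
  bform (Q i) (follower_state (x t) i) (follower_state (M *m x t) i))); split => t.
  apply: is_derive_sum_fun => i.
  have := is_derive_mul_fun (is_derive_cst (w i) t 1) (is_derive_bform (Q i) (follower_state_derive t i ^~ xs)).
  by move=> d; apply: is_derive_eq d _; rewrite /cst mul0r add0r.
pose X i := sqnorm (follower_state (x t) i).
have X_ge0 i : 0 <= X i by apply: sqnorm_ge0.
have follower_le i :
    bform (Q i) (follower_state (M *m x t) i) (follower_state (x t) i) +
    bform (Q i) (follower_state (x t) i) (follower_state (M *m x t) i)
    <= - (eps i / 2 * X i) + D i * (N%:R * \sum_j (a i j)%:R * X j).
  rewrite closed_loop_follower.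
  have [_ _ ] := follower_iss i (follower_state (x t) i) (\sum_j (a i j)%:R *: follower_state (x t) j).
  by move/le_trans; apply; rewrite lerD2l ler_wpM2l // sqnorm_neighbours_le.
apply: le_trans (ler_sum _ (fun i _ => ler_wpM2l (ltW (w_gt0 i)) (follower_le i))) _.
under eq_bigr do rewrite mulrDr; rewrite big_split /=.
have := weighted_coupling_le K_gt0 w_gt0 D_ge0 X_ge0 w_edge K_large.
have : c * sqnorm (x t) <= \sum_i w i * (eps i / 4) * X i.
  rewrite sqnorm_follower_state mulr_sumr; apply: ler_sum => i _.
  by apply: ler_wpM2r; [exact: X_ge0 | exact: c_le].
have -> : \sum_i w i * - (eps i / 2 * X i) = - (2 * \sum_i w i * (eps i / 4) * X i).
  by rewrite mulr_sumr -sumrN; apply: eq_bigr => i _; field.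
lra.
Qed.

End PlatoonLyapunov.

Unset Implicit Arguments.

Theorem theorem3 (R : realType) (N : nat)
    (a : 'I_N -> 'I_N -> bool) (p : 'I_N -> bool)
    (tau eps alpha : 'I_N -> R) (P : 'I_N -> 'M[R]_3) :
  (forall i, 0 < tau i) ->
  (forall i, a i i = false) ->
  directed_acyclic a ->
  (forall i, 0 < deg R a i + (p i)%:R) ->
  (forall i, 0 < eps i) ->
  (forall i, psd (P i)) ->
  (forall i, ARE_root (Ai (tau i)) (Bi (tau i)) (eps i) (P i)) ->
  (forall i, (2 * (deg R a i + (p i)%:R))^-1 <= alpha i) ->
  asymptotically_stable (closed_loop tau alpha P (Gmat R a p)).
Proof.
move=> _ _ acyclic g_gt0 eps_gt0 P_psd P_ARE alpha_ge.
have iss i := feedback_iss (P_psd i).1 (P_ARE i) (P_psd i).2 (eps_gt0 i) (g_gt0 i) (alpha_ge i).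
have [Q /boolp.choice[c1 /boolp.choice[c2 /boolp.choice[D iss_i]]]] := boolp.choice iss.
have c1_gt0 i : 0 < c1 i by case: (iss_i i).
have c2_ge0 i : 0 <= c2 i by case: (iss_i i) => _ /ltW.
have D_ge0 i : 0 <= D i by case: (iss_i i).
have follower_iss i := let: And4 _ _ _ h := iss_i i in h.
pose K := 1 + \sum_j 4 * N%:R * (\sum_i D i) / eps j.
have coupling_ge0 j : 0 <= 4 * N%:R * (\sum_i D i) / eps j.
  by rewrite divr_ge0 ?mulr_ge0 ?sumr_ge0 // ltW.
have K_ge1 : 1 <= K by rewrite lerDl sumr_ge0.
have K_large j : N%:R * \sum_i D i <= K * (eps j / 4).
  have : 4 * N%:R * (\sum_i D i) / eps j <= K.
    exact: le_trans (ler_term_sum j coupling_ge0) (ler_wpDl ler01 (lexx _)).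
  rewrite ler_pdivrMr //; lra.
have [w [w_gt0 w_edge]] := acyclic_weights acyclic K_ge1.
have K_gt0 : 0 < K by rewrite (lt_le_trans ltr01).
have [m1 m1_gt0 W_ge] := platoon_lyapunov_ge c1_gt0 follower_iss w_gt0.
have [m2 m2_gt0 W_le] := platoon_lyapunov_le c2_ge0 follower_iss w_gt0.
have [m3 m3_gt0 W_derive] :=
  platoon_lyapunov_derive eps_gt0 D_ge0 follower_iss w_gt0 w_edge K_gt0 K_large.
exact: asymptotically_stable_of_lyapunov m1_gt0 m2_gt0 m3_gt0 W_ge W_le W_derive.
Qed.
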